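(* Let $S$ be a multiplicatively closed subset of an $r$-lattice $L$ (with $1\in S$, $0\notin S$). Then $L$ is an $S$-Noetherian lattice if and only if every $S$-prime element of $L$ is $S$-compact.
   Context: A multiplicative lattice is a complete lattice $L$ with a commutative, associative multiplication $\cdot$ distributing over arbitrary joins, with $1$ as identity. Compact elements are defined as usual ($c\le\bigvee a_\alpha$ implies $c$ below a finite subjoin); $L_*$ denotes the set of compact elements. $(a:b)=\bigvee\{x\mid xb\le a\}$. An element $m$ is principal if it is meet principal ($a\wedge mb=m((a:m)\wedge b)$ for all $a,b$) and join principal ($a\vee(b:m)=(am\vee b):m$ for all $a,b$). An $r$-lattice is a modular, principally generated, compactly generated multiplicative lattice with $1$ compact. A multiplicatively closed subset is a nonempty $S\subseteq L_*$ closed under multiplication. An element $a$ is $S$-compact if there exist a compact $b$ and $s\in S$ with $s a\le b\le a$; $L$ is $S$-Noetherian if every element is $S$-compact. A proper element $p$ with $t\not\le p$ for all $t\in S$ is $S$-prime if there exists $s\in S$ such that for all $a,b\in L$, $a\cdot b\le p$ implies $s\cdot a\le p$ or $s\cdot b\le p$. *)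

From Stdlib Require Import List.
Set Implicit Arguments.

Record MultLattice := {
  car :> Type;
  le : car -> car -> Prop;
  sup : (car -> Prop) -> car;
  mul : car -> car -> car;
  one : car;
  le_refl : forall a, le a a;
  le_trans : forall a b c, le a b -> le b c -> le a c;
  le_antisym : forall a b, le a b -> le b a -> a = b;
  sup_ub : forall (X : car -> Prop) x, X x -> le x (sup X);
  sup_least : forall (X : car -> Prop) b, (forall x, X x -> le x b) -> le (sup X) b;
  mulC : forall a b, mul a b = mul b a;
  mulA : forall a b c, mul a (mul b c) = mul (mul a b) c;
  mul1 : forall a, mul one a = a;
  one_top : forall a, le a one;
  mul_sup : forall a (X : car -> Prop),
      mul a (sup X) = sup (fun y => exists x, X x /\ y = mul a x)
}.

Section Ops.
Context {L : MultLattice}.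

Definition zero : L := sup L (fun _ => False).
Definition join (a b : L) : L := sup L (fun x => x = a \/ x = b).
Definition meet (a b : L) : L := sup L (fun x => le L x a /\ le L x b).
Definition colon (a b : L) : L := sup L (fun x => le L (mul L x b) a).

Definition compact (c : L) : Prop :=
  forall X : L -> Prop, le L c (sup L X) ->
    exists l : list L, (forall x, In x l -> X x) /\
                       le L c (sup L (fun x => In x l)).

Definition meet_principal (m : L) : Prop :=
  forall a b, meet a (mul L m b) = mul L m (meet (colon a m) b).
Definition join_principal (m : L) : Prop :=
  forall a b, join a (colon b m) = colon (join (mul L a m) b) m.
Definition principal (m : L) : Prop := meet_principal m /\ join_principal m.

Definition modular : Prop :=
  forall a b c, le L a c -> join a (meet b c) = meet (join a b) c.
Definition principally_generated : Prop :=
  forall a, a = sup L (fun x => principal x /\ le L x a).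
Definition compactly_generated : Prop :=
  forall a, a = sup L (fun x => compact x /\ le L x a).

Definition r_lattice : Prop :=
  modular /\ principally_generated /\ compactly_generated /\ compact (one L).

(* multiplicatively closed subset: nonempty subset of L_* closed under mul *)
Definition mult_closed (S : L -> Prop) : Prop :=
  (exists s, S s) /\ (forall s, S s -> compact s) /\
  (forall s t, S s -> S t -> S (mul L s t)).

Definition S_compact (S : L -> Prop) (a : L) : Prop :=
  exists b s, compact b /\ S s /\ le L (mul L s a) b /\ le L b a.

Definition S_Noetherian (S : L -> Prop) : Prop := forall a, S_compact S a.

Definition S_prime (S : L -> Prop) (p : L) : Prop :=
  p <> one L /\ (forall t, S t -> ~ le L t p) /\
  exists s, S s /\ forall a b, le L (mul L a b) p ->
     le L (mul L s a) p \/ le L (mul L s b) p.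
End Ops.

(* If some element is not S-compact, Zorn's lemma gives an element p maximal
   among the non-S-compact ones: a compact element below the join of a chain
   lies below a member of the chain.  Such a p is prime.  Otherwise ab <= p with
   a, b not below p, and a principal x <= a lies outside p; then p v x and
   (p : x) strictly exceed p, so both are S-compact.  Modularity gives
   s p <= p0 v (x ^ p) for a compact p0 <= p, and x ^ p <= x (p : x) by meet
   principality, so the product t s of the two witnesses makes p S-compact.
   Hence p is S-prime (with s = 1) but not S-compact. *)

From mathcomp Require Import ssreflect ssrfun ssrbool boolp classical_sets.
From Stdlib Require Import List Classical.

#[local] Arguments le_refl {m} a.
#[local] Arguments le_trans {m a b c}.
#[local] Arguments le_antisym {m a b}.
#[local] Arguments sup_ub {m X x}.
#[local] Arguments sup_least {m X b}.
#[local] Arguments mulC {m}.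
#[local] Arguments mulA {m}.
#[local] Arguments mul1 {m}.
#[local] Arguments one_top {m}.
#[local] Arguments mul_sup {m}.

Declare Scope mlattice_scope.
Local Notation "x <= y" := (le _ x y) : mlattice_scope.
Local Notation "x * y" := (mul _ x y) : mlattice_scope.
Local Open Scope mlattice_scope.

Section MultLatticeTheory.
Context {L : MultLattice}.
Implicit Types (a b c d m p x y z : L) (X D : L -> Prop).

Definition lsup (l : list L) : L := sup L (fun w => In w l).

Definition directed D : Prop :=
  (exists d, D d) /\
  forall d e, D d -> D e -> exists f, [/\ D f, d <= f & e <= f].

Lemma le_sup {X x a} : X x -> a <= x -> a <= sup L X.
Proof. by move=> Xx ax; apply: le_trans ax (sup_ub Xx). Qed.

Lemma sup_le_sup X Y :
  (forall x, X x -> exists2 y, Y y & x <= y) -> sup L X <= sup L Y.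
Proof.
by move=> XY; apply: sup_least => x /XY [y Yy xy]; exact: le_sup Yy xy.
Qed.

Lemma lsup_incl {l l'} : incl l l' -> lsup l <= lsup l'.
Proof.
by move=> ll'; apply: sup_le_sup => w /ll' w_l'; exists w => //; apply: le_refl.
Qed.

Lemma zero_least a : zero <= a.
Proof. by apply: sup_least. Qed.

Lemma join_l a b : a <= join a b.
Proof. by apply: sup_ub; left. Qed.

Lemma join_r a b : b <= join a b.
Proof. by apply: sup_ub; right. Qed.

Lemma join_least {a b c} : a <= c -> b <= c -> join a b <= c.
Proof. by move=> ac bc; apply: sup_least => z [-> | ->]. Qed.

Lemma join_mono {a a' b b'} : a <= a' -> b <= b' -> join a b <= join a' b'.
Proof.
move=> aa' bb'; apply: join_least.
- exact: le_trans aa' (join_l _ _).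
- exact: le_trans bb' (join_r _ _).
Qed.

Lemma meet_l a b : meet a b <= a.
Proof. by apply: sup_least => z []. Qed.

Lemma meet_r a b : meet a b <= b.
Proof. by apply: sup_least => z []. Qed.

Lemma meet_glb {a b c} : c <= a -> c <= b -> c <= meet a b.
Proof. by move=> ca cb; apply: sup_ub. Qed.

Lemma meetC a b : meet a b = meet b a.
Proof.
by apply: le_antisym; apply: meet_glb; (exact: meet_l || exact: meet_r).
Qed.

Lemma le_mul2l m {a b} : a <= b -> m * a <= m * b.
Proof.
move=> ab; have -> : b = join a b.
  apply: le_antisym; first exact: join_r.
  by apply: join_least => //; apply: le_refl.
by rewrite /join mul_sup; apply: sup_ub; exists a; split=> //; left.
Qed.

Lemma le_mul2r m {a b} : a <= b -> a * m <= b * m.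
Proof. by move=> ab; rewrite ![_ * m]mulC; exact: le_mul2l. Qed.

Lemma mul_le_r m a : m * a <= a.
Proof. by rewrite -{2}(mul1 a); apply: le_mul2r; apply: one_top. Qed.

Lemma mul_le_l m a : a * m <= a.
Proof. by rewrite mulC; exact: mul_le_r. Qed.

Lemma mul_join m a b : m * join a b <= join (m * a) (m * b).
Proof.
rewrite /join mul_sup; apply: sup_least => _ [z [[-> | ->] ->]].
- exact: join_l.
- exact: join_r.
Qed.

Lemma mul_colon_le a m : m * colon a m <= a.
Proof.
rewrite mulC /colon mulC mul_sup.
by apply: sup_least => _ [z [zm ->]]; rewrite mulC.
Qed.

Lemma le_colon a m z : z * m <= a -> z <= colon a m.
Proof. by move=> zm; apply: sup_ub. Qed.

Lemma colon_mono a a' m : a <= a' -> colon a m <= colon a' m.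
Proof.
move=> aa'; apply: le_colon; rewrite mulC.
exact: le_trans (mul_colon_le _ _) aa'.
Qed.

Lemma meet_principal_le a {m} : meet_principal m -> meet a m <= m * colon a m.
Proof.
move=> /(_ a (one L)); rewrite [m * one L]mulC mul1 => ->.
by apply: le_mul2l; exact: meet_l.
Qed.

Lemma compact_le_directed {c D} :
  compact c -> directed D -> c <= sup L D -> exists2 d, D d & c <= d.
Proof.
move=> c_c [[d0 Dd0] D_up] cD.
have [l [Dl c_l]] := c_c D cD.
suff [f Df l_f] : exists2 f, D f & forall w, In w l -> w <= f.
  by exists f => //; exact: le_trans c_l (sup_least l_f).
elim: l Dl {c_l} => [|w l IH] Dl; first by exists d0.
have [f Df l_f] := IH (fun v lv => Dl v (or_intror lv)).
have [g [Dg wg fg]] := D_up w f (Dl w (or_introl erefl)) Df.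
by exists g => // v [<- | lv]; [exact: wg | exact: le_trans (l_f v lv) fg].
Qed.

Lemma chain_directed D : (exists d, D d) -> total_on D (le L) -> directed D.
Proof.
move=> D_ne D_tot; split=> // d e Dd De.
by case: (D_tot d e Dd De) => [de|ed]; [exists e | exists d];
  split=> //; apply: le_refl.
Qed.

Lemma compact_zero : compact (@zero L).
Proof. by move=> X _; exists nil; split=> //; exact: zero_least. Qed.

Lemma compact_join a b : compact a -> compact b -> compact (join a b).
Proof.
move=> a_c b_c X abX.
have [la [Xla a_la]] := a_c X (le_trans (join_l a b) abX).
have [lb [Xlb b_lb]] := b_c X (le_trans (join_r a b) abX).
exists (la ++ lb); split; first by move=> w /(in_app_or _ _ w) []; auto.
apply: join_least.
- exact: le_trans a_la (lsup_incl (incl_appl _ (incl_refl _))).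
- exact: le_trans b_lb (lsup_incl (incl_appr _ (incl_refl _))).
Qed.

Lemma S_compact_ge {S t a} : (forall s, S s -> compact s) ->
  S t -> t <= a -> S_compact S a.
Proof. by move=> S_c St ta; exists t, t; do !split; auto using mul_le_l. Qed.

Lemma S_compact_sup_directed {S D} :
  directed D -> S_compact S (sup L D) -> exists2 d, D d & S_compact S d.
Proof.
move=> D_dir [b [s [b_c [Ss [sb bD]]]]].
have [d Dd bd] := compact_le_directed b_c D_dir bD.
exists d => //; exists b, s; do !split => //.
exact: le_trans (le_mul2l s (sup_ub Dd)) sb.
Qed.

Lemma exists_maximal_not_S_compact {S a} : ~ S_compact S a ->
  exists p, ~ S_compact S p /\
            forall q, p <= q -> ~ q <= p -> S_compact S q.
Proof.
move=> a_nSc; pose T := {x : L | ~ S_compact S x}.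
have [u|u v w /asboolP uv /asboolP vw|A A_tot|[p p_nSc] p_max] :=
  @ZL_preorder T (exist _ a a_nSc) (fun u v => `[< sval u <= sval v >]).
- by apply/asboolP; apply: le_refl.
- by apply/asboolP; exact: le_trans uv vw.
- case: (classic (exists u, A u)) => [[u0 Au0] | A_empty]; last first.
    by exists (exist _ a a_nSc) => u Au; case: A_empty; exists u.
  pose C x := exists2 u, A u & x = sval u.
  have C_dir : directed C.
    apply: chain_directed; first by exists (sval u0), u0.
    move=> _ _ [u Au ->] [v Av ->].
    by case: (A_tot u v Au Av) => /asboolP; auto.
  have C_nSc : ~ S_compact S (sup L C).
    by move=> /(S_compact_sup_directed C_dir) [_ [u _ ->]]; exact: svalP u.
  exists (exist _ (sup L C) C_nSc : T) => u Au.
  by apply/asboolP; apply: sup_ub; exists u.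
- exists p; split=> // q pq q_np; apply: NNPP => q_nSc; apply: q_np.
  by have /asboolP := p_max (exist _ q q_nSc) (asboolT pq).
Qed.

Section RLattice.
Hypothesis modL : @modular L.
Hypothesis pgL : @principally_generated L.
Hypothesis cgL : @compactly_generated L.

(* x y lies below x ^ (v X), a join of compacts k each below some x ^ z with
   z a finite join from X, and x ^ z <= x (z : x) by meet principality; join
   principality then puts y below the directed join of the residuals (z : x),
   and compactness of y selects one of them. *)
Lemma principal_mul_compact {x y} : principal x -> compact y -> compact (x * y).
Proof.
move=> [x_mp x_jp] y_c X xyX.
pose Z z := exists2 l, (forall w, In w l -> X w) & z = colon (lsup l) x.
have Z_dir : directed Z.
  split; first by exists (colon (lsup nil) x), nil.
  move=> _ _ [l Xl ->] [l' Xl' ->]; exists (colon (lsup (l ++ l')) x); split.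
  - by exists (l ++ l') => // w /(in_app_or _ _ w) []; auto.
  - by apply: colon_mono; apply: lsup_incl; apply: incl_appl; apply: incl_refl.
  - by apply: colon_mono; apply: lsup_incl; apply: incl_appr; apply: incl_refl.
have xy_Z : x * y <= x * sup L Z.
  apply: le_trans (meet_glb (mul_le_l y x) xyX) _.
  rewrite {1}(cgL (meet x (sup L X))); apply: sup_least => k [k_c k_le].
  have [l [Xl k_l]] := k_c X (le_trans k_le (meet_r _ _)).
  apply: le_trans _ (le_mul2l x (sup_ub (ex_intro2 _ _ l Xl erefl))).
  apply: le_trans _ (meet_principal_le (lsup l) x_mp).
  by apply: meet_glb => //; exact: le_trans k_le (meet_l _ _).
have y_Z : y <= sup L Z.
  have : y <= colon (join (sup L Z * x) zero) x.
    apply: le_colon; rewrite mulC [sup L Z * x]mulC.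
    exact: le_trans xy_Z (join_l _ _).
  rewrite -x_jp => /le_trans; apply; apply: join_least; first exact: le_refl.
  apply: (le_sup (x := colon (lsup nil) x)); first by exists nil.
  by apply: colon_mono; exact: zero_least.
have [_ [l Xl ->] y_l] := compact_le_directed y_c Z_dir y_Z.
by exists l; split=> //; exact: le_trans (le_mul2l x y_l) (mul_colon_le _ _).
Qed.

Lemma compact_le_join_compact {p x b} : compact b -> b <= join p x ->
  exists p0, [/\ compact p0, p0 <= p & b <= join p0 x].
Proof.
move=> b_c bpx.
pose K z := (compact z /\ z <= p) \/ z = x.
have [l [Kl b_l]] : exists l, (forall z, In z l -> K z) /\ b <= lsup l.
  apply: b_c; apply: le_trans bpx _.
  apply: join_least; last by apply: sup_ub; right.
  rewrite {1}(cgL p); apply: sup_le_sup => z pz.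
  by exists z; [left | apply: le_refl].
suff [p0 [p0_c p0p l_p0x]] :
    exists p0, [/\ compact p0, p0 <= p & lsup l <= join p0 x].
  by exists p0; split=> //; exact: le_trans b_l l_p0x.
elim: l Kl {b_l} => [|w l IH] Kl.
  by exists zero; split; [exact: compact_zero | exact: zero_least ..].
have [p0 [p0_c p0p l_p0x]] := IH (fun v lv => Kl v (or_intror lv)).
have l_le : lsup l <= join (join w p0) x.
  by apply: le_trans l_p0x (join_mono _ (le_refl _)); exact: join_r.
case: (Kl w (or_introl erefl)) => [[w_c wp] | ->].
- exists (join w p0); split; [exact: compact_join | exact: join_least |].
  apply: sup_least => v [<- | lv]; last exact: le_trans (sup_ub lv) l_le.
  by apply: le_trans (join_l _ _) (join_mono (join_l _ _) (le_refl _)).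
- exists p0; split=> //; apply: sup_least => v [<- | lv]; first exact: join_r.
  exact: le_trans (sup_ub lv) l_p0x.
Qed.

Lemma S_compact_of_join_colon {S p x} :
  (forall s t, S s -> S t -> S (s * t)) -> principal x ->
  S_compact S (join p x) -> S_compact S (colon p x) -> S_compact S p.
Proof.
move=> S_mul x_pr [b [s [b_c [Ss [sb bpx]]]]] [c [t [c_c [St [tc cpx]]]]].
have [p0 [p0_c p0p b_p0x]] := compact_le_join_compact b_c bpx.
have xc_p : x * c <= p by apply: le_trans (le_mul2l x cpx) (mul_colon_le _ _).
exists (join p0 (x * c)), (t * s); do !split; auto.
- by apply: compact_join => //; exact: principal_mul_compact.
- have sp : s * p <= join p0 (meet x p).
    rewrite modL //; apply: meet_glb; last exact: mul_le_r.
    by apply: le_trans (le_trans (le_mul2l s (join_l p x)) sb) b_p0x.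
  rewrite -mulA; apply: le_trans (le_mul2l t sp) _.
  apply: le_trans (mul_join _ _ _) (join_mono (mul_le_r _ _) _).
  rewrite meetC.
  apply: le_trans (le_mul2l t (meet_principal_le p (proj1 x_pr))) _.
  by rewrite mulA [t * x]mulC -mulA; apply: le_mul2l.
- exact: join_least.
Qed.

Lemma maximal_not_S_compact_prime {S p} :
  (forall s t, S s -> S t -> S (s * t)) -> ~ S_compact S p ->
  (forall q, p <= q -> ~ q <= p -> S_compact S q) ->
  forall a b, a * b <= p -> a <= p \/ b <= p.
Proof.
move=> S_mul p_nSc p_max a b abp; apply: NNPP => /not_or_and [a_np b_np].
have [x [x_pr xa x_np]] : exists x, [/\ principal x, x <= a & ~ x <= p].
  apply: NNPP => no_x; apply: a_np; rewrite {1}(pgL a).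
  apply: sup_least => x [x_pr xa]; apply: NNPP => x_np.
  by apply: no_x; exists x.
have b_px : b <= colon p x.
  by apply: le_colon; rewrite mulC; exact: le_trans (le_mul2r b xa) abp.
apply: p_nSc; apply: (S_compact_of_join_colon S_mul x_pr); apply: p_max.
- exact: join_l.
- by move=> pxp; apply: x_np; exact: le_trans (join_r p x) pxp.
- by apply: le_colon; exact: mul_le_l.
- by move=> pxp; apply: b_np; exact: le_trans b_px pxp.
Qed.

End RLattice.
End MultLatticeTheory.

Theorem mainTheorem3 (L : MultLattice) (S : L -> Prop) :
  @r_lattice L -> mult_closed S -> S (one L) -> ~ S (@zero L) ->
  (S_Noetherian S <-> forall p : L, S_prime S p -> S_compact S p).
Proof.
move=> [modL [pgL [cgL _]]] [_ [S_c S_mul]] S1 _.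
split=> [S_noeth p _ | S_prime_compact]; first exact: S_noeth.
apply: NNPP => /not_all_ex_not [a a_nSc].
have [p [p_nSc p_max]] := exists_maximal_not_S_compact a_nSc.
have p_prime : forall a b, a * b <= p -> a <= p \/ b <= p :=
  maximal_not_S_compact_prime modL pgL cgL S_mul p_nSc p_max.
have S_not_below : forall t, S t -> ~ t <= p.
  by move=> t St tp; exact: p_nSc (S_compact_ge S_c St tp).
apply: p_nSc; apply: S_prime_compact; split; [|split] => //.
- by move=> p1; apply: (S_not_below _ S1); rewrite -p1; apply: le_refl.
- by exists (one L); split=> // a' b'; rewrite !mul1; exact: p_prime.
Qed.
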